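(* Let $n\ge 7$ and let $G$ be a bicyclic graph on $n$ vertices. (1) $\mathrm{irr}_t(G)\ge 2n-4$. Equality holds if and only if the degree sequence of $G$ is $(3,3,2,\ldots,2)$, i.e. two vertices of degree $3$ and $n-2$ of degree $2$. (2) If the degree sequence of $G$ is not $(3,3,2,\ldots,2)$, then $\mathrm{irr}_t(G)\ge 2n-2$. Equality holds if and only if the degree sequence of $G$ is $(4,2,\ldots,2)$, i.e. one vertex of degree $4$ and $n-1$ of degree $2$. (3) If the degree sequence of $G$ is neither $(3,3,2,\ldots,2)$ nor $(4,2,\ldots,2)$, then $\mathrm{irr}_t(G)\ge 4n-10$. Equality holds if and only if the degree sequence of $G$ is $(3,3,3,2,\ldots,2,1)$, i.e. three vertices of degree $3$, $n-4$ of degree $2$ and one of degree $1$.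
   Context: A bicyclic graph is a simple connected graph whose number of edges equals its number of vertices plus one. For a graph $G=(V,E)$ and $w\in V$, $d_G(w)$ is the degree of $w$. The total irregularity is $\mathrm{irr}_t(G)=\frac12\sum_{x,y\in V}|d_G(x)-d_G(y)|$, where the sum runs over all ordered pairs of vertices. Degree sequences are listed in nonincreasing order. *)

From mathcomp Require Import all_boot.
Set Implicit Arguments. Unset Strict Implicit. Unset Printing Implicit Defensive.

Definition simple_graph (T : finType) (e : rel T) : Prop :=
  symmetric e /\ irreflexive e.

Definition connected_graph (T : finType) (e : rel T) : Prop :=
  forall x y : T, connect e x y.

Definition edges (T : finType) (e : rel T) : {set {set T}} :=
  [set [set x; y] | x in T, y in T & e x y].

Definition bicyclic (T : finType) (e : rel T) : Prop :=
  [/\ simple_graph e, connected_graph e & #|edges e| = #|T|.+1].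

Definition deg (T : finType) (e : rel T) (x : T) : nat := #|[set y | e x y]|.

Definition absdiff (m n : nat) : nat := (m - n) + (n - m).

Definition irrt (T : finType) (e : rel T) : nat :=
  (\sum_(x : T) \sum_(y : T) absdiff (deg e x) (deg e y)) ./2.

Definition degseq (T : finType) (e : rel T) : seq nat :=
  sort geq [seq deg e x | x <- enum T].

From mathcomp Require Import all_boot zify.

Set Implicit Arguments.
Unset Strict Implicit.
Unset Printing Implicit Defensive.

(* The degrees of a bicyclic graph on n vertices are positive and sum to
   2n + 2, and irr_t only depends on the multiset of degrees.  Split this
   multiset into z twos, N leaves and a part u of degrees at least 3: the
   degree sum forces the excess \sum_(d in u) (d - 2) to be N + 2, and then
     irr_t = z N + z (N + 2) + N (N + 2 + |u|) + irr_t(u).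
   Without leaves u is [4] or [3; 3]; with one leaf u is [3; 3; 3] or has at
   most two entries, giving irr_t >= 4n - 9; with two or more leaves the first
   three terms alone are at least 4n - 9. *)

Section Handshake.

Variables (T : finType) (e : rel T).
Hypotheses (e_sym : symmetric e) (e_irr : irreflexive e).

Lemma sum_deg_arcs : \sum_(x : T) deg e x = \sum_(p : T * T | e p.1 p.2) 1.
Proof.
rewrite /deg; under eq_bigr => x _ do rewrite -sum1_card.
by rewrite pair_big_dep; apply: eq_bigl => -[x y]; rewrite /= inE.
Qed.

Lemma arcs_of_edge a b : e a b ->
  [pred p : T * T | e p.1 p.2 && ([set p.1; p.2] == [set a; b])]
  =i [set (a, b); (b, a)].
Proof.
move=> eab [x y]; rewrite !inE /= !xpair_eqE.
apply/idP/idP => [/andP [exy /eqP Exy] | /orP [] /andP [/eqP -> /eqP ->]].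
- have x_ab : x \in [set a; b] by rewrite -Exy set21.
  have y_ab : y \in [set a; b] by rewrite -Exy set22.
  move: x_ab y_ab; rewrite !inE.
  by case/orP=> /eqP ? /orP [] /eqP ?; subst x y;
    rewrite ?eqxx ?orbT //; rewrite e_irr in exy.
- by rewrite eab eqxx.
- by rewrite e_sym eab setUC eqxx.
Qed.

Lemma handshake : \sum_(x : T) deg e x = 2 * #|edges e|.
Proof.
rewrite sum_deg_arcs (partition_big (fun p : T * T => [set p.1; p.2])
  (mem (edges e))) => [|[x y] exy]; last by apply/imset2P; exists x y; rewrite ?inE.
rewrite mulnC -sum_nat_const; apply: eq_bigr => E /imset2P [a b _].
rewrite inE => /andP [_ eab] ->; rewrite sum1_card (eq_card (arcs_of_edge eab)) cards2.
by rewrite xpair_eqE; case: eqP => // ab; rewrite ab e_irr in eab.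
Qed.

End Handshake.

Lemma deg_gt0 (T : finType) (e : rel T) (x : T) :
  connected_graph e -> 1 < #|T| -> 0 < deg e x.
Proof.
move=> e_conn; rewrite (cardD1 x) ltnS => /card_gt0P [y]; rewrite !inE => /andP [yx _].
case/connectP: (e_conn x y) => [[|z p]] /= => [_ Eyx | /andP [exz _] _].
  by rewrite Eyx eqxx in yx.
by apply/card_gt0P; exists z; rewrite inE.
Qed.

Definition pair_dist (s : seq nat) : nat :=
  \sum_(a <- s) \sum_(b <- s) absdiff a b.

Lemma perm_pair_dist s t : perm_eq s t -> pair_dist s = pair_dist t.
Proof.
by move=> st; rewrite /pair_dist (perm_big _ st); apply: eq_bigr => a _; apply: perm_big.
Qed.

Lemma absdiffC m n : absdiff m n = absdiff n m.
Proof. by rewrite /absdiff addnC. Qed.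

Lemma sum_nseq (k a : nat) (F : nat -> nat) : \sum_(i <- nseq k a) F i = F a * k.
Proof. by rewrite big_nseq iter_addn_0. Qed.

Definition excess (u : seq nat) : nat := \sum_(d <- u) (d - 2).

Section LargeDegrees.

Variable u : seq nat.
Hypothesis u_ge3 : all (leq 3) u.

Lemma sum_absdiff_small c : c <= 2 ->
  \sum_(d <- u) absdiff c d = excess u + (2 - c) * size u.
Proof.
move=> c_le2; rewrite /excess -sum1_size big_distrr -big_split /=.
by apply: eq_big_seq => d /(allP u_ge3) /=; rewrite /absdiff; lia.
Qed.

Lemma sumn_excess : sumn u = excess u + 2 * size u.
Proof.
rewrite sumnE /excess -sum1_size big_distrr -big_split /=.
by apply: eq_big_seq => d /(allP u_ge3) /=; lia.
Qed.

Lemma size_le_excess : size u <= excess u.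
Proof.
rewrite -sum1_size /excess !big_seq.
by apply: leq_sum => d /(allP u_ge3) /=; lia.
Qed.

Lemma pair_dist_split z N :
  pair_dist (nseq z 2 ++ nseq N 1 ++ u) =
  2 * (z * N + z * excess u + N * (excess u + size u)) + pair_dist u.
Proof.
rewrite /pair_dist; under eq_bigr => a _ do rewrite !big_cat /= !sum_nseq.
rewrite !big_cat /= !sum_nseq !sum_absdiff_small // !big_split /= -!big_distrl /=.
rewrite (eq_bigr _ (fun a _ => absdiffC a 2)) (eq_bigr _ (fun a _ => absdiffC a 1)).
rewrite !sum_absdiff_small //= /absdiff; lia.
Qed.

End LargeDegrees.

Lemma pair_dist_nseq k a : pair_dist (nseq k a) = 0.
Proof. by rewrite /pair_dist sum_nseq sum_nseq /absdiff subnn. Qed.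

Lemma excess2_cases u : all (leq 3) u -> excess u = 2 -> u = [:: 4] \/ u = [:: 3; 3].
Proof.
move=> u_ge3 ex2; have := size_le_excess u_ge3; rewrite ex2.
case: u u_ge3 ex2 => [|a [|b [|c u]]] //=; rewrite /excess ?big_cons big_nil //.
- by move=> _ a2; left; congr [:: _]; lia.
- by move=> /and3P [a3 b3 _] ab2; right; congr [:: _; _]; lia.
Qed.

Lemma excess3_cases u : all (leq 3) u -> excess u = 3 -> size u < 3 \/ u = [:: 3; 3; 3].
Proof.
move=> u_ge3 ex3; have := size_le_excess u_ge3; rewrite ex3.
case: u u_ge3 ex3 => [|a [|b [|c [|d u]]]] //=; [left.. |];
  rewrite // /excess !big_cons big_nil.
by move=> /and4P [a3 b3 c3 _] abc3 _; right; congr [:: _; _; _]; lia.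
Qed.

Lemma geq_trans : transitive geq.
Proof. by move=> m n p mn nm; apply: leq_trans nm mn. Qed.

Lemma geq_total : total geq.
Proof. by move=> m n; apply: leq_total. Qed.

Lemma geq_anti : antisymmetric geq.
Proof. by move=> m n /andP [nm mn]; apply/eqP; rewrite eqn_leq; apply/andP. Qed.

Lemma sort_geq_eq s t : perm_eq s t -> sorted geq t -> sort geq s = t.
Proof.
move=> st t_sorted; rewrite -(sorted_sort geq_trans t_sorted).
exact/(perm_sortP geq_total geq_trans geq_anti).
Qed.

Lemma sort_geq_count k s t : count (pred1 k) s != count (pred1 k) t -> sort geq s <> t.
Proof. by move=> /eqP neq st; apply: neq; rewrite -st count_sort. Qed.

Lemma path_geq_nseq x y k : y <= x -> path geq x (nseq k y).
Proof. by move=> yx; elim: k x yx => //= k IHk x -> /=; apply: IHk. Qed.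

Lemma sort_degrees u z N : sorted geq u -> all (leq 2) u ->
  sort geq (nseq z 2 ++ nseq N 1 ++ u) = u ++ nseq z 2 ++ nseq N 1.
Proof.
move=> u_sorted u_ge2; apply: sort_geq_eq; first by rewrite catA perm_catC.
have tail_path x : 2 <= x -> path geq x (nseq z 2 ++ nseq N 1).
  elim: z x => [|k IHk] x x_ge2 /=; first by apply: path_geq_nseq; lia.
  by rewrite x_ge2; apply: IHk.
case: u u_sorted u_ge2 => [|a u] u_sorted u_ge2.
  exact: path_sorted (tail_path 2 _).
rewrite /= cat_path; apply/andP; split => //.
by apply: tail_path; apply: (allP u_ge2); apply: mem_last.
Qed.

Definition degseq_33 n := [:: 3; 3] ++ nseq (n - 2) 2.
Definition degseq_4 n := [:: 4] ++ nseq (n - 1) 2.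
Definition degseq_3331 n := [:: 3; 3; 3] ++ nseq (n - 4) 2 ++ [:: 1].

Definition irr_degseq_spec n (I : nat) (ds : seq nat) : Prop :=
  [\/ I = 2 * n - 4 /\ ds = degseq_33 n,
      I = 2 * n - 2 /\ ds = degseq_4 n,
      I = 4 * n - 10 /\ ds = degseq_3331 n |
      4 * n - 9 <= I /\ [/\ ds <> degseq_33 n, ds <> degseq_4 n & ds <> degseq_3331 n]].

Section DegreeSplit.

Variables (n z N : nat) (u : seq nat).
Hypotheses (n_ge7 : 7 <= n) (u_ge3 : all (leq 3) u).
Hypotheses (size_split : z + N + size u = n) (excess_u : excess u = N + 2).

Local Notation degs := (nseq z 2 ++ nseq N 1 ++ u).

Lemma count_pred1_small k : k < 3 -> count (pred1 k) u = 0.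
Proof.
move=> k_lt3; rewrite (eq_in_count (a2 := pred0)) ?count_pred0 //.
move=> d /(allP u_ge3) /=.
by case: eqP => // ->; rewrite leqNgt k_lt3.
Qed.

Lemma half_pair_dist_degs :
  (pair_dist degs)./2 = z * N + z * (N + 2) + N * (N + 2 + size u) + (pair_dist u)./2.
Proof. by rewrite pair_dist_split // excess_u -!divn2; lia. Qed.

Lemma irr_degseq_spec_no_leaves : N = 0 ->
  irr_degseq_spec n (pair_dist degs)./2 (sort geq degs).
Proof.
move=> N0; have ex2 : excess u = 2 by rewrite excess_u N0.
have size_u := size_split; rewrite half_pair_dist_degs N0 in size_u *.
case: (excess2_cases u_ge3 ex2) => u_eq; rewrite u_eq sort_degrees // in size_u *.
- have -> : z = n - 1 by move: size_u => /=; lia.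
  rewrite (pair_dist_nseq 1 4) /=; apply: Or42.
  by rewrite /degseq_4 cats0; split => //; lia.
- have -> : z = n - 2 by move: size_u => /=; lia.
  rewrite (pair_dist_nseq 2 3) /=; apply: Or41.
  by rewrite /degseq_33 cats0; split => //; lia.
Qed.

Lemma irr_degseq_spec_one_leaf : N = 1 ->
  irr_degseq_spec n (pair_dist degs)./2 (sort geq degs).
Proof.
move=> N1; have ex3 : excess u = 3 by rewrite excess_u N1.
have size_u := size_split; rewrite half_pair_dist_degs N1 in size_u *.
case: (excess3_cases u_ge3 ex3) => [small_u | u_eq].
- apply: Or44; split; first lia.
  split; [apply: (sort_geq_count (k := 1)) | apply: (sort_geq_count (k := 1))
         | apply: (sort_geq_count (k := 3))];
    rewrite /degseq_33 /degseq_4 /degseq_3331 !count_cat !count_nseq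
      ?(count_pred1_small (k := 1)) //=.
  by rewrite !mul0n !add0n addn0 ltn_eqF // (leq_ltn_trans (count_size _ _) small_u).
- rewrite u_eq sort_degrees // in size_u *.
  have -> : z = n - 4 by move: size_u => /=; lia.
  rewrite (pair_dist_nseq 3 3) /=; apply: Or43; split => //; lia.
Qed.

Lemma irr_degseq_spec_many_leaves : 1 < N ->
  irr_degseq_spec n (pair_dist degs)./2 (sort geq degs).
Proof.
move=> N_gt1; have size_u := size_le_excess u_ge3; rewrite excess_u in size_u.
apply: Or44; split; first by rewrite half_pair_dist_degs; nia.
split; apply: (sort_geq_count (k := 1));
  rewrite /degseq_33 /degseq_4 /degseq_3331 !count_cat !count_nseq
    (count_pred1_small (k := 1)) //=; lia.
Qed.

End DegreeSplit.

Lemma perm_degrees s : all (leq 1) s ->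
  perm_eq s (nseq (count (pred1 2) s) 2 ++ nseq (count (pred1 1) s) 1
             ++ filter (leq 3) s).
Proof.
move=> s_pos; apply/permP => a; elim: s s_pos => [|d s IHs] //= /andP [d_pos s_pos].
move: (IHs s_pos); rewrite !count_cat !count_nseq /= => ->.
by case: d d_pos => [|[|[|d]]] //= _; case: (a 1); case: (a 2) => /=; lia.
Qed.

Lemma irr_degseq_spec_degrees n s :
  7 <= n -> size s = n -> all (leq 1) s -> sumn s = 2 * n + 2 ->
  irr_degseq_spec n (pair_dist s)./2 (sort geq s).
Proof.
move=> n_ge7 size_s s_pos sum_s; have s_split := perm_degrees s_pos.
set z := count _ s in s_split; set N := count _ s in s_split.
set u := filter _ s in s_split.
have u_ge3 : all (leq 3) u := filter_all _ _.
clearbody z N u.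
have size_split : z + N + size u = n.
  by rewrite -size_s (perm_size s_split) !size_cat !size_nseq addnA.
have excess_u : excess u = N + 2.
  by move: sum_s; rewrite (perm_sumn s_split) !sumn_cat !sumn_nseq sumn_excess //; lia.
rewrite (perm_pair_dist s_split) (perm_sortP geq_total geq_trans geq_anti _ _ s_split).
have [N0 | [N1 | N_gt1]] : N = 0 \/ N = 1 \/ 1 < N by lia.
- exact: irr_degseq_spec_no_leaves.
- exact: irr_degseq_spec_one_leaf.
- exact: irr_degseq_spec_many_leaves.
Qed.

Lemma extremal_degseqs_neq n :
  [/\ degseq_33 n <> degseq_4 n, degseq_33 n <> degseq_3331 n
    & degseq_4 n <> degseq_3331 n].
Proof. by split=> //; rewrite /degseq_33 /degseq_3331; case: (n - 2). Qed.

Lemma irr_degseq_spec_bounds n I ds :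
  7 <= n -> irr_degseq_spec n I ds ->
  [/\ 2 * n - 4 <= I /\ (I = 2 * n - 4 <-> ds = degseq_33 n),
      (ds <> degseq_33 n -> 2 * n - 2 <= I /\ (I = 2 * n - 2 <-> ds = degseq_4 n)) &
      (ds <> degseq_33 n -> ds <> degseq_4 n ->
         4 * n - 10 <= I /\ (I = 4 * n - 10 <-> ds = degseq_3331 n))].
Proof.
move=> n_ge7; have [ne_33_4 ne_33_3331 ne_4_3331] := extremal_degseqs_neq n.
by case=> [[-> ->] | [-> ->] | [-> ->] | [I_ge [ne_33 ne_4 ne_3331]]];
  repeat (split || move=> ?); solve [lia | congruence].
Qed.

Theorem theorem15 (n : nat) (T : finType) (e : rel T) :
  #|T| = n -> 7 <= n -> bicyclic e ->
  let ds1 := [:: 3; 3] ++ nseq (n - 2) 2 in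
  let ds2 := [:: 4] ++ nseq (n - 1) 2 in
  let ds3 := [:: 3; 3; 3] ++ nseq (n - 4) 2 ++ [:: 1] in
  [/\ (2 * n - 4 <= irrt e /\ (irrt e = 2 * n - 4 <-> degseq e = ds1)),
      (degseq e <> ds1 ->
         2 * n - 2 <= irrt e /\ (irrt e = 2 * n - 2 <-> degseq e = ds2)) &
      (degseq e <> ds1 -> degseq e <> ds2 ->
         4 * n - 10 <= irrt e /\ (irrt e = 4 * n - 10 <-> degseq e = ds3))].
Proof.
move=> card_T n_ge7 [[e_sym e_irr] e_conn edges_T] /=.
set s := [seq deg e x | x <- enum T].
have size_s : size s = n by rewrite size_map -cardE.
have s_pos : all (leq 1) s.
  by rewrite all_map; apply/allP => x _; apply: deg_gt0 => //; lia.
have sum_s : sumn s = 2 * n + 2.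
  by rewrite sumnE big_map big_enum /= handshake // edges_T card_T; lia.
have -> : irrt e = (pair_dist s)./2.
  rewrite /irrt /pair_dist big_map big_enum; congr _./2.
  by apply: eq_bigr => x _; rewrite big_map big_enum.
apply: irr_degseq_spec_bounds => //.
exact: irr_degseq_spec_degrees.
Qed.
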